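(* Let $\mathbf V$ be a monoid variety such that the one-letter word $t$ is an isoterm for $\mathbf V$ and $\mathbf V$ satisfies $xtx\approx xtx^2$. If $\mathbb M_\gamma(a^+t)\not\subseteq\mathbf V$, then $\mathbf V$ satisfies $xtxs\approx xtxsx$.
   Context: Words are elements of the free monoid $\mathfrak A^*$ over a countably infinite alphabet. A word $\mathbf w$ is an isoterm for $\mathbf V$ if $\mathbf V$ satisfies no identity $\mathbf w\approx\mathbf w'$ with $\mathbf w'\ne\mathbf w$. Let $\tau_1$ be the congruence on $\mathfrak A^*$ generated by $a=aa$ for all letters $a$; $\mathbf u\,\gamma\,\mathbf v$ iff $\mathbf u\,\tau_1\,\mathbf v$ and $\mathbf u,\mathbf v$ have the same set of letters occurring at least twice. For $\gamma$-classes write $\mathtt v\le\mathtt u$ iff $\mathtt u=\mathtt p\mathtt v\mathtt s$ in $\mathfrak A^*/\gamma$. For a set $\mathtt W$ of $\gamma$-classes, $M_\gamma(\mathtt W)$ is the Rees quotient of $\mathfrak A^*/\gamma$ by the ideal of classes not $\le$ any element of $\mathtt W$, and $\mathbb M_\gamma(\mathtt W)$ is the monoid variety it generates. Here $a^+t$ denotes the $\gamma$-class $\{a^kt:k\ge2\}$. *)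

From mathcomp Require Import all_boot.
Set Implicit Arguments. Unset Strict Implicit. Unset Printing Implicit Defensive.

Definition word := seq nat.

Record monoid := Monoid {
  mcar :> Type;
  mop : mcar -> mcar -> mcar;
  munit : mcar;
  mopA : forall x y z, mop x (mop y z) = mop (mop x y) z;
  mop1l : forall x, mop munit x = x;
  mop1r : forall x, mop x munit = x }.

Definition meval (M : monoid) (f : nat -> M) (w : word) : M :=
  foldr (fun a acc => mop (f a) acc) (munit M) w.

Definition msat (M : monoid) (u v : word) : Prop :=
  forall f : nat -> M, meval f u = meval f v.

(* A monoid variety is presented by a set of identities Sigma (Birkhoff):
   V = class of all monoids satisfying Sigma. *)
Definition identities := word -> word -> Prop.

Definition in_variety (Sigma : identities) (M : monoid) : Prop :=
  forall u v, Sigma u v -> msat M u v.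

Definition vsat (Sigma : identities) (u v : word) : Prop :=
  forall M : monoid, in_variety Sigma M -> msat M u v.

Definition isoterm (Sigma : identities) (w : word) : Prop :=
  forall w', vsat Sigma w w' -> w' = w.

Inductive tau1 : word -> word -> Prop :=
| tau1_step p a s : tau1 (p ++ a :: s) (p ++ a :: a :: s)
| tau1_refl u : tau1 u u
| tau1_sym u v : tau1 u v -> tau1 v u
| tau1_trans u v w : tau1 u v -> tau1 v w -> tau1 u w.

Definition gamma (u v : word) : Prop :=
  tau1 u v /\ (forall x : nat, (2 <= count_mem x u) = (2 <= count_mem x v)).

(* [v] <= [u] in A^*/gamma : [u] = [p][v][s] *)
Definition gle (v u : word) : Prop :=
  exists p s, gamma u (p ++ v ++ s).

(* M_gamma(W), W given by a list of representatives of gamma-classes.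
   x lies in the ideal iff its class is not <= any element of W. *)
Definition in_ideal (W : seq word) (x : word) : Prop :=
  ~ (exists2 w, w \in W & gle x w).

(* equality of images in the Rees quotient M_gamma(W) *)
Definition rees_eq (W : seq word) (x y : word) : Prop :=
  gamma x y \/ (in_ideal W x /\ in_ideal W y).

Definition wsubst (sigma : nat -> word) (w : word) : word :=
  flatten (map sigma w).

(* M_gamma(W) satisfies u ~ v: since A^* ->> M_gamma(W) is a surjective
   monoid homomorphism, this holds iff all substitutions of words into u, v
   give elements equal in M_gamma(W). *)
Definition Mgamma_sat (W : seq word) (u v : word) : Prop :=
  forall sigma : nat -> word, rees_eq W (wsubst sigma u) (wsubst sigma v).

Definition Mgamma_in (W : seq word) (Sigma : identities) : Prop :=
  forall u v, Sigma u v -> Mgamma_sat W u v.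

Definition let_a : nat := 0.
Definition let_t : nat := 1.
Definition let_x : nat := 0.
Definition let_s : nat := 2.

(* the gamma-class a^+ t = {a^k t : k >= 2}, represented by a a t *)
Definition aplus_t : seq word := [:: [:: let_a; let_a; let_t]].

(* Suppose V fails xtxs ~ xtxsx; we show that M_gamma(a^+t) lies in V.  If
   V satisfies p ~ q with p outside the ideal, then p = a^m or p = a^m t.
   Since t is an isoterm, each letter occurs in p and q equally often or at
   least twice in both, so q = a^k or q = a^i t a^j.  All cases give p gamma q
   except a^m t ~ a^i t a^j with j >= 1.  Modulo xtx ~ xtx^2 (hence
   x^2 ~ x^3) that identity becomes x^2 t ~ x^i t x^j with i + j >= 2.  For
   i = 0 it makes x^2 commute with everything; for i >= 1 it yields
   xtxs ~ xtxsx^j.  Either way xtxs ~ xtxsx follows. *)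
From mathcomp Require Import all_boot.
From mathcomp Require Import zify.
From Stdlib Require Import Classical_Prop.
Set Implicit Arguments. Unset Strict Implicit. Unset Printing Implicit Defensive.

Definition occ_agree (m n : nat) : Prop := m = n \/ 2 <= m /\ 2 <= n.

Lemma meval_cat (M : monoid) (f : nat -> M) u v :
  meval f (u ++ v) = mop (meval f u) (meval f v).
Proof. by elim: u => [|a u IH] /=; rewrite ?mop1l // IH mopA. Qed.

Lemma meval_wsubst (M : monoid) (f : nat -> M) sigma u :
  meval f (wsubst sigma u) = meval (fun a => meval f (sigma a)) u.
Proof. by elim: u => [|a u IH] //=; rewrite /wsubst /= meval_cat -IH. Qed.

Lemma vsat_wsubst Sigma u v sigma :
  vsat Sigma u v -> vsat Sigma (wsubst sigma u) (wsubst sigma v).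
Proof. by move=> Huv M HM f; rewrite !meval_wsubst (Huv M HM). Qed.

Lemma vsat_sym Sigma u v : vsat Sigma u v -> vsat Sigma v u.
Proof. by move=> Huv M HM f; rewrite (Huv M HM). Qed.

Lemma vsat_catl Sigma w u v : vsat Sigma u v -> vsat Sigma (w ++ u) (w ++ v).
Proof. by move=> Huv M HM f; rewrite !meval_cat (Huv M HM). Qed.

Definition mact (M : monoid) (f : nat -> M) (w : word) (C : M) : M :=
  foldr (fun a acc => mop (f a) acc) C w.

Lemma mact_meval (M : monoid) (f : nat -> M) w C : mact f w C = mop (meval f w) C.
Proof. by elim: w => [|a w IH] /=; rewrite ?mop1l // -mopA -IH. Qed.

Lemma vsat_mact Sigma u v (M : monoid) : vsat Sigma u v -> in_variety Sigma M ->
  forall f C, mact f u C = mact (M := M) f v C.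
Proof. by move=> Huv HM f C; rewrite !mact_meval (Huv M HM). Qed.

Lemma mact_cat (M : monoid) (f : nat -> M) u v C :
  mact f (u ++ v) C = mact f u (mact f v C).
Proof. exact: foldr_cat. Qed.

Lemma mact_nseq (M : monoid) (f : nat -> M) n c C :
  mact f (nseq n c) C = iter n (mop (f c)) C.
Proof. by elim: n => //= n ->. Qed.

Section PowerIdentities.

Variables (M : monoid) (X : M).
Hypothesis xBx_xBxx : forall B C : M, mop X (mop B (mop X C)) = mop X (mop B (mop X (mop X C))).

Lemma XX_XXX (C : M) : mop X (mop X C) = mop X (mop X (mop X C)).
Proof. by have := xBx_xBxx (munit M) C; rewrite !mop1l. Qed.

Lemma iter_X_ge2 n (C : M) : 2 <= n -> iter n (mop X) C = mop X (mop X C).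
Proof. by elim: n => [|[|[|n]] IH] // _; rewrite iterS IH // -XX_XXX. Qed.

Lemma xtxs_xtxsx_of_square_identity i j (T S : M) :
  (forall B C, mop X (mop X (mop B C)) = iter i (mop X) (mop B (iter j (mop X) C))) ->
  0 < j -> 2 <= i + j ->
  mop X (mop T (mop X (mop S (munit M)))) = mop X (mop T (mop X (mop S (mop X (munit M))))).
Proof.
move=> Hsq Hj Hij; case: i Hsq Hij => [|i] Hsq Hij.
  have XX_comm B C : mop X (mop X (mop B C)) = mop B (mop X (mop X C)).
    by rewrite Hsq /= iter_X_ge2.
  by rewrite xBx_xBxx XX_comm [RHS]xBx_xBxx XX_comm -XX_XXX.
have xtx_absorb B C : mop X (mop T (mop X (mop B C))) =
                      mop X (mop T (mop X (mop B (iter j (mop X) C)))).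
  rewrite xBx_xBxx Hsq; case: i {Hsq Hij} => [|i] //.
  by rewrite iter_X_ge2 // -xBx_xBxx.
case: j Hj {Hij Hsq} xtx_absorb => [|[|j]] // _ xtx_absorb.
by rewrite xtx_absorb [RHS]xtx_absorb !iter_X_ge2 // -XX_XXX.
Qed.

Lemma xtxs_xtxsx_of_power_identity m i j (T S : M) :
  (forall B C, iter m (mop X) (mop B C) = iter i (mop X) (mop B (iter j (mop X) C))) ->
  0 < j -> occ_agree m (i + j) ->
  mop X (mop T (mop X (mop S (munit M)))) = mop X (mop T (mop X (mop S (mop X (munit M))))).
Proof.
move=> Hpow Hj Hm; case: m Hpow Hm => [|[|m]] Hpow Hm; first by case: Hm; lia.
- have [? ?] : i = 0 /\ j = 1 by case: Hm; lia.
  subst i j.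
  apply: (@xtxs_xtxsx_of_square_identity 0 2) => // B C.
  by move: Hpow => /= Hpow; rewrite Hpow Hpow.
- apply: (@xtxs_xtxsx_of_square_identity i j) => [B C||]; rewrite -?Hpow ?iter_X_ge2 //.
  by case: Hm; lia.
Qed.

End PowerIdentities.

Lemma vsat_xtxs_xtxsx_of_power_identity Sigma m i j :
  vsat Sigma [:: let_x; let_t; let_x] [:: let_x; let_t; let_x; let_x] ->
  vsat Sigma (nseq m let_a ++ [:: let_t]) (nseq i let_a ++ let_t :: nseq j let_a) ->
  0 < j -> occ_agree m (i + j) ->
  vsat Sigma [:: let_x; let_t; let_x; let_s] [:: let_x; let_t; let_x; let_s; let_x].
Proof.
move=> Hxtx Hpow Hj Hm M HM f.
apply: (@xtxs_xtxsx_of_power_identity M (f let_x) _ m i j) Hj Hm => B C.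
- exact: (vsat_mact Hxtx HM (fun c => if c == let_x then f let_x else B)).
- have := vsat_mact Hpow HM (fun c => if c == let_a then f let_x else B) C.
  by rewrite !mact_cat /= !mact_nseq.
Qed.

Lemma vsat_nseq_t Sigma i j : isoterm Sigma [:: let_t] ->
  vsat Sigma (nseq i let_t) (nseq j let_t) -> i <= 1 -> i = j.
Proof.
move=> Ht; case: i => [|[|i]] Hij // _.
- by have /(congr1 size) := Ht _ (vsat_catl [:: let_t] Hij); rewrite /= size_nseq => -[].
- by have /(congr1 size) := Ht _ Hij; rewrite size_nseq.
Qed.

Definition keep_only (c : nat) (a : nat) : word := if a == c then [:: let_t] else [::].

Lemma wsubst_keep_only c u : wsubst (keep_only c) u = nseq (count_mem c u) let_t.
Proof.
elim: u => [|a u IH] //=.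
by rewrite /wsubst /= -/(wsubst _ u) IH /keep_only; case: (a == c).
Qed.

Lemma count_mem_vsat Sigma u v c : isoterm Sigma [:: let_t] -> vsat Sigma u v ->
  occ_agree (count_mem c u) (count_mem c v).
Proof.
move=> Ht /(vsat_wsubst (keep_only c)); rewrite !wsubst_keep_only => Huv.
have [Hu|Hu] := leqP (count_mem c u) 1; first by left; exact: vsat_nseq_t Huv Hu.
have [Hv|Hv] := leqP (count_mem c v) 1; last by right.
by left; apply/esym; exact: vsat_nseq_t (vsat_sym Huv) Hv.
Qed.

Lemma nseq_count_mem (q : word) c :
  (forall d, d != c -> count_mem d q = 0) -> q = nseq (count_mem c q) c.
Proof.
move=> Hq; have Hall : all (pred1 c) q.
  by apply/allP => d Hd /=; apply/negPn/negP => /Hq /count_memPn; rewrite Hd.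
by move: (Hall); rewrite all_count => /eqP ->; exact/all_pred1P.
Qed.

Lemma single_t_shape (q : word) :
  (forall d, d != let_a -> d != let_t -> count_mem d q = 0) -> count_mem let_t q = 1 ->
  exists i j, q = nseq i let_a ++ let_t :: nseq j let_a.
Proof.
move=> Hq Ht.
have Hin : let_t \in q by rewrite -has_pred1 has_count Ht.
case/splitPr: Hin Hq Ht => q1 q2 Hq Ht.
have only_a d : d != let_a -> count_mem d q1 = 0 /\ count_mem d q2 = 0.
  move=> Hda; have [->|Hdt] := eqVneq d let_t; first by move: Ht; rewrite count_cat /=; lia.
  by move: (Hq d Hda Hdt); rewrite count_cat /= eq_sym (negbTE Hdt); lia.
exists (count_mem let_a q1), (count_mem let_a q2).
by rewrite -!nseq_count_mem // => d /only_a [].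
Qed.

Lemma gamma_refl u : gamma u u.
Proof. by split; [apply: tau1_refl|]. Qed.

Lemma gamma_sym u v : gamma u v -> gamma v u.
Proof. by case=> Huv Hc; split; [apply: tau1_sym|move=> x; rewrite Hc]. Qed.

Lemma tau1_nseq a n s : tau1 (nseq n.+1 a ++ s) (a :: s).
Proof.
elim: n => [|n IH]; first exact: tau1_refl.
exact: tau1_trans (tau1_sym (tau1_step [::] a (nseq n a ++ s))) IH.
Qed.

Lemma gamma_nseq m k s : occ_agree m k -> gamma (nseq m let_a ++ s) (nseq k let_a ++ s).
Proof.
case=> [->|[]]; first exact: gamma_refl.
case: m => [|m] //; case: k => [|k] // Hm Hk; split.
  exact: tau1_trans (tau1_nseq _ _ _) (tau1_sym (tau1_nseq _ _ _)).
by move=> x; rewrite !count_cat !count_nseq /=; case: (let_a == x) => /=; lia.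
Qed.

Lemma vsat_a_pow Sigma m q : isoterm Sigma [:: let_t] ->
  vsat Sigma (nseq m let_a) q -> gamma (nseq m let_a) q.
Proof.
move=> Ht Hpq; have Hc d := count_mem_vsat d Ht Hpq.
have Hq : q = nseq (count_mem let_a q) let_a.
  apply: nseq_count_mem => d Hd.
  by move: (Hc d); rewrite count_nseq /= eq_sym (negbTE Hd) => -[<-|[]].
have := Hc let_a; rewrite count_nseq /= mul1n => /(gamma_nseq [::]).
by rewrite !cats0 -Hq.
Qed.

Lemma vsat_a_pow_t Sigma m q : isoterm Sigma [:: let_t] ->
  vsat Sigma (nseq m let_a ++ [:: let_t]) q ->
  gamma (nseq m let_a ++ [:: let_t]) q \/
  exists i j, [/\ q = nseq i let_a ++ let_t :: nseq j let_a, 0 < j & occ_agree m (i + j)].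
Proof.
move=> Ht Hpq; have Hc d := count_mem_vsat d Ht Hpq.
have [i [j Hq]] : exists i j, q = nseq i let_a ++ let_t :: nseq j let_a.
  apply: single_t_shape => [d Hda Hdt|].
    move: (Hc d); rewrite count_cat count_nseq /= ![_ == d]eq_sym.
    by rewrite (negbTE Hda) (negbTE Hdt) => -[<-|[]].
  by move: (Hc let_t); rewrite count_cat count_nseq /= => -[<-|[]].
have Hm : occ_agree m (i + j).
  by move: (Hc let_a); rewrite Hq !count_cat /= !count_nseq /= => -[?|[? ?]]; [left|right]; lia.
case: j Hq Hm => [|j] -> Hm; last by right; exists i, j.+1.
by left; apply: gamma_nseq; rewrite -[i]addn0.
Qed.

(* With let_a = 0 and let_t = 1, these are exactly the words in a^* t^*. *)
Definition sorted01 (w : word) : bool := sorted leq w && all (fun c => c <= 1) w.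

Lemma tau1_sorted01 u v : tau1 u v -> sorted01 u = sorted01 v.
Proof.
elim=> [p a s|w|x y _ ->|x y z _ -> _ ->] //.
have Hsorted : sorted leq (p ++ a :: a :: s) = sorted leq (p ++ a :: s).
  by case: p => [|c p] /=; rewrite ?leqnn // !cat_path /= leqnn.
by rewrite /sorted01 Hsorted !all_cat /=; case: (a <= 1).
Qed.

Lemma sorted01_shape p : sorted01 p -> count_mem let_t p <= 1 ->
  exists m, p = nseq m let_a \/ p = nseq m let_a ++ [:: let_t].
Proof.
elim: p => [|c p IH]; first by exists 0; left.
case/andP=> /= Hs /andP[Hc Hall] Hcount.
case: c Hc Hs Hcount => [|[|c]] // _ Hs Hcount.
- have [||m Hm] := IH; rewrite ?/sorted01 ?(path_sorted Hs) //.
  by exists m.+1; case: Hm => ->; [left|right].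
- exists 0; right; case: p Hs Hall Hcount {IH} => [|b p] //= /andP[Hb _] /andP[Hb1 _].
  by have -> : b = 1 by lia.
Qed.

Lemma gle_aat_shape p : gle p [:: let_a; let_a; let_t] ->
  exists m, p = nseq m let_a \/ p = nseq m let_a ++ [:: let_t].
Proof.
case=> [pre [suf [/tau1_sorted01 Hw Hc]]].
move: Hw (Hc let_t); rewrite /sorted01 /= => /esym/andP[Hs Hall] /esym/negbT.
rewrite -ltnNge !count_cat => Ht.
apply: sorted01_shape; last by rewrite ltnS in Ht; apply: leq_trans Ht; rewrite addnCA leq_addr.
rewrite /sorted01 (cat_sorted2 (cat_sorted2 Hs).2).1.
by move: Hall; rewrite !all_cat => /and3P[].
Qed.

Lemma gamma_of_vsat_below_aplus_t Sigma p q :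
  isoterm Sigma [:: let_t] ->
  vsat Sigma [:: let_x; let_t; let_x] [:: let_x; let_t; let_x; let_x] ->
  ~ vsat Sigma [:: let_x; let_t; let_x; let_s] [:: let_x; let_t; let_x; let_s; let_x] ->
  vsat Sigma p q -> (exists2 w, w \in aplus_t & gle p w) -> gamma p q.
Proof.
move=> Ht Hxtx Hnot Hpq [w]; rewrite inE => /eqP -> /gle_aat_shape [m [Hp|Hp]]; subst p.
  exact: vsat_a_pow Ht Hpq.
case: (vsat_a_pow_t Ht Hpq) => // [[i [j [Hq Hj Hm]]]].
by case: Hnot; subst q; exact: vsat_xtxs_xtxsx_of_power_identity Hpq Hj Hm.
Qed.

Lemma Mgamma_in_aplus_t Sigma :
  isoterm Sigma [:: let_t] ->
  vsat Sigma [:: let_x; let_t; let_x] [:: let_x; let_t; let_x; let_x] ->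
  ~ vsat Sigma [:: let_x; let_t; let_x; let_s] [:: let_x; let_t; let_x; let_s; let_x] ->
  Mgamma_in aplus_t Sigma.
Proof.
move=> Ht Hxtx Hnot u v Huv sigma.
have Hpq : vsat Sigma (wsubst sigma u) (wsubst sigma v).
  exact: vsat_wsubst (fun M HM => HM u v Huv).
have [Hp|Hp] := classic (exists2 w, w \in aplus_t & gle (wsubst sigma u) w).
  by left; exact: gamma_of_vsat_below_aplus_t Ht Hxtx Hnot Hpq Hp.
have [Hq|Hq] := classic (exists2 w, w \in aplus_t & gle (wsubst sigma v) w).
  by left; apply: gamma_sym; exact: gamma_of_vsat_below_aplus_t Ht Hxtx Hnot (vsat_sym Hpq) Hq.
by right.
Qed.

Theorem lemma4p1 (Sigma : identities) :
  isoterm Sigma [:: let_t] ->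
  vsat Sigma [:: let_x; let_t; let_x] [:: let_x; let_t; let_x; let_x] ->
  ~ Mgamma_in aplus_t Sigma ->
  vsat Sigma [:: let_x; let_t; let_x; let_s] [:: let_x; let_t; let_x; let_s; let_x].
Proof.
move=> Ht Hxtx HnotM; apply: NNPP => Hnot; apply: HnotM.
exact: Mgamma_in_aplus_t.
Qed.
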